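(* Let $\rho\in\mathcal{L}_{0}$ be positive, $\delta\in(0,\alpha]$ and $k\in\mathbb{N}^{+}$. Then there is a positive integer $M$ such that any $(\rho,\delta)$-lattice $\{w_{j}\}$ on $\mathbb{D}$ can be divided into $M$ subsequences with the property that if $w_{i}$ and $w_{j}$ are two different points in the same subsequence, then $|w_{i}-w_{j}|\geq2^{k}\delta\min(\rho(w_{i}),\rho(w_{j}))$.
   Context: $\mathbb{D}$ is the open unit disc. $C_0$ is the set of continuous $\rho$ on $\mathbb{D}$ with $\rho(z)\to0$ as $|z|\to1$. $\mathcal{L}$ is the set of real $\rho\in C_0$ with $\sup_{z\ne w}|\rho(z)-\rho(w)|/|z-w|<\infty$; $\mathcal{L}_0$ is the set of $\rho\in\mathcal{L}$ such that for every $\varepsilon>0$ there is a compact $E\subset\mathbb{D}$ with $|\rho(z)-\rho(w)|\le\varepsilon|z-w|$ for $z,w\in\mathbb{D}\setminus E$. $D^r(z)=D(z,r\rho(z))$ (Euclidean disc). There are constants $\alpha>0$, $s>0$ depending only on $\rho$ (with $\alpha$ fixed) such that for $0<r\le\alpha$ a $(\rho,r)$-lattice exists, where a $(\rho,r)$-lattice is a sequence $\{w_k\}\subset\mathbb{D}$ with $\mathbb{D}=\bigcup_kD^r(w_k)$, the discs $D^{sr}(w_k)$ pairwise disjoint, and $\{D^{2\alpha}(w_k)\}$ a covering of $\mathbb{D}$ of finite multiplicity. *)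

From HB Require Import structures.
From mathcomp Require Import all_boot all_order all_algebra.
From mathcomp Require Import all_classical all_reals topology normedtype.
Set Implicit Arguments. Unset Strict Implicit. Unset Printing Implicit Defensive.
Import Order.TTheory GRing.Theory Num.Theory numFieldNormedType.Exports.
Local Open Scope classical_set_scope.
Local Open Scope ring_scope.

Section Defs.
Variable R : realType.
Local Notation C := (R * R)%type.

Definition normc (z : C) : R := Num.sqrt (z.1 ^+ 2 + z.2 ^+ 2).
Definition distc (z w : C) : R := normc (z.1 - w.1, z.2 - w.2).

Definition inD : set C := [set z | normc z < 1].

Definition disc (c : C) (r : R) : set C := [set z | distc z c < r].

Definition Drho (rho : C -> R) (r : R) (z : C) : set C := disc z (r * rho z).

Definition C0 (rho : C -> R) : Prop :=
  {within inD, continuous rho} /\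
  (forall eps : R, 0 < eps -> exists eta : R, 0 < eta /\
     forall z, inD z -> 1 - eta < normc z -> `|rho z| < eps).

Definition Lclass (rho : C -> R) : Prop :=
  C0 rho /\
  exists L : R, forall z w, inD z -> inD w -> `|rho z - rho w| <= L * distc z w.

Definition L0class (rho : C -> R) : Prop :=
  Lclass rho /\
  forall eps : R, 0 < eps -> exists E : set C,
    compact E /\ E `<=` inD /\
    forall z w, inD z -> inD w -> ~ E z -> ~ E w ->
      `|rho z - rho w| <= eps * distc z w.

Definition lattice (rho : C -> R) (alpha s r : R) (w : nat -> C) : Prop :=
  [/\ (forall k, inD (w k)),
      (forall z, inD z <-> exists k, Drho rho r (w k) z),
      (forall i j, i <> j -> Drho rho (s * r) (w i) `&` Drho rho (s * r) (w j) = set0),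
      (forall z, inD z -> exists k, Drho rho (2 * alpha) (w k) z) &
      (exists N : nat, forall z, inD z -> forall l : seq nat, uniq l ->
          (forall k, k \in l -> Drho rho (2 * alpha) (w k) z) -> (size l <= N)%N)].
End Defs.

From HB Require Import structures.
From mathcomp Require Import all_boot all_order all_algebra.
From mathcomp Require Import all_classical all_reals topology normedtype.
From mathcomp Require Import ring lra.
Set Implicit Arguments. Unset Strict Implicit. Unset Printing Implicit Defensive.
Import Order.TTheory GRing.Theory Num.Theory numFieldNormedType.Exports.
Local Open Scope classical_set_scope.
Local Open Scope ring_scope.

(* Since the discs D^{s delta}(w_j) are pairwise disjoint, |w_i - w_j| >= s delta (rho(w_i) + rho(w_j)).
   If |w_n - w_j| < K delta min(rho(w_n), rho(w_j)) with K = 2^k, this forces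
   rho(w_j) > (s/K) rho(w_n), and w_j lies in the square of half-side K delta rho(w_n)
   around w_n.  A grid of mesh h = s^2 delta rho(w_n)/K on that square holds at most one
   such w_j per cell, so every lattice point has at most N^2 such neighbours, with
   N = floor(2 K^2/s^2) + 1 independent of n and of the lattice.  Greedy colouring along
   the enumeration of the lattice then needs only N^2 + 1 colours. *)

Section Plane.
Variable R : realType.
Local Notation C := (R * R)%type.

Definition sqdistc (z w : C) : R := (z.1 - w.1) ^+ 2 + (z.2 - w.2) ^+ 2.

Lemma distcE (z w : C) : distc z w = Num.sqrt (sqdistc z w).
Proof. by []. Qed.

Lemma sqdistcC (z w : C) : sqdistc z w = sqdistc w z.
Proof. by rewrite /sqdistc; ring. Qed.

Lemma distcC (z w : C) : distc z w = distc w z.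
Proof. by rewrite !distcE sqdistcC. Qed.

Lemma norm_lt_sqr (x c : R) : 0 <= c -> (`|x| < c) = (x ^+ 2 < c ^+ 2).
Proof. by move=> c_ge0; rewrite -(real_normK (num_real x)) ltr_pXn2r ?nnegrE. Qed.

Lemma distc_lt_sqr (z w : C) (r : R) : 0 < r ->
  (distc z w < r) = (sqdistc z w < r ^+ 2).
Proof.
by move=> r_gt0; rewrite distcE -{1}(ger0_norm (ltW r_gt0)) -sqrtr_sqr ltr_sqrt ?exprn_gt0.
Qed.

Lemma disjoint_discs_sqdistc (c1 c2 : C) (r1 r2 : R) : 0 < r1 -> 0 < r2 ->
  disc c1 r1 `&` disc c2 r2 = set0 -> (r1 + r2) ^+ 2 <= sqdistc c1 c2.
Proof.
move=> r1_gt0 r2_gt0 disj; rewrite leNgt; apply/negP => close.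
have r_gt0 : 0 < r1 + r2 by lra.
pose t := r1 / (r1 + r2).
have t_r1 : t * (r1 + r2) = r1 by rewrite /t mulfVK // gt_eqF.
have t_r2 : (1 - t) * (r1 + r2) = r2 by rewrite mulrBl t_r1; ring.
have t_gt0 : 0 < t by rewrite divr_gt0.
have t_lt1 : 0 < 1 - t by rewrite -(pmulr_lgt0 _ r_gt0) t_r2.
(* the point dividing [c1, c2] in the ratio r1 : r2 lies in both discs *)
pose z := (c1.1 + t * (c2.1 - c1.1), c1.2 + t * (c2.2 - c1.2)).
suff : (disc c1 r1 `&` disc c2 r2) z by rewrite disj.
split; rewrite /disc /= distc_lt_sqr //.
- have -> : sqdistc z c1 = t ^+ 2 * sqdistc c1 c2 by rewrite /sqdistc /=; ring.
  by rewrite -t_r1 [X in _ < X]exprMn ltr_pM2l ?exprn_gt0.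
- have -> : sqdistc z c2 = (1 - t) ^+ 2 * sqdistc c1 c2 by rewrite /sqdistc /=; ring.
  by rewrite -t_r2 [X in _ < X]exprMn ltr_pM2l ?exprn_gt0.
Qed.

Lemma truncn_eq_dist (u v : R) : 0 <= u -> 0 <= v ->
  Num.truncn u = Num.truncn v -> `|u - v| < 1.
Proof.
move=> /truncn_itv /andP[u_ge u_lt] /truncn_itv /andP[v_ge v_lt] uv.
rewrite uv -natr1 in u_ge u_lt; rewrite -natr1 in v_lt.
by rewrite ltr_distlC; apply/andP; split; lra.
Qed.

Lemma grid_cell_lt (x r h : R) : 0 < h -> `|x| < r ->
  (Num.truncn ((x + r) / h) < (Num.truncn (2 * r / h)).+1)%N.
Proof.
move=> h_gt0; rewrite ltr_norml => /andP[x_gt x_lt].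
rewrite ltnS truncn_le_nat; apply: le_lt_trans (truncnS_gt _).
by rewrite ler_pM2r ?invr_gt0 //; lra.
Qed.

Lemma grid_packing (I : eqType) (f : I -> C) (c : C) (r h : R) (l : seq I) :
  0 < h -> uniq l ->
  (forall i, i \in l -> `|(f i).1 - c.1| < r /\ `|(f i).2 - c.2| < r) ->
  {in l &, forall i j, i != j -> 2 * h ^+ 2 <= sqdistc (f i) (f j)} ->
  (size l <= (Num.truncn (2 * r / h)).+1 ^ 2)%N.
Proof.
move=> h_gt0 l_uniq in_square separated.
pose cell x := Num.truncn ((x + r) / h).
pose cell2 i := (cell ((f i).1 - c.1), cell ((f i).2 - c.2)).
have cell_ge x : `|x| < r -> 0 <= (x + r) / h.
  by rewrite ltr_norml => /andP[? ?]; rewrite divr_ge0 ?ltW //; lra.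
have same_cell x y : `|x| < r -> `|y| < r -> cell x = cell y -> (x - y) ^+ 2 < h ^+ 2.
  move=> x_lt y_lt /(truncn_eq_dist (cell_ge _ x_lt) (cell_ge _ y_lt)).
  have -> : (x + r) / h - (y + r) / h = (x - y) / h by field; rewrite gt_eqF.
  rewrite normrM [`|h^-1|]gtr0_norm ?invr_gt0 // ltr_pdivrMr // mul1r ltr_norml => /andP[? ?].
  nra.
have cell2_inj : {in l &, injective cell2}.
  move=> i j i_l j_l [same1 same2]; apply/eqP; apply: contraT => ij.
  have [i1 i2] := in_square i i_l; have [j1 j2] := in_square j j_l.
  have := same_cell _ _ i1 j1 same1; have := same_cell _ _ i2 j2 same2.
  have := separated i j i_l j_l ij; rewrite /sqdistc.
  have -> : (f i).1 - c.1 - ((f j).1 - c.1) = (f i).1 - (f j).1 by ring.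
  have -> : (f i).2 - c.2 - ((f j).2 - c.2) = (f i).2 - (f j).2 by ring.
  lra.
pose N := (Num.truncn (2 * r / h)).+1.
have cells_in_grid : {subset map cell2 l <= [seq (a, b) | a <- iota 0 N, b <- iota 0 N]}.
  move=> _ /mapP[i i_l ->]; have [i1 i2] := in_square i i_l.
  by apply: allpairs_f; rewrite mem_iota /= grid_cell_lt.
have cells_uniq : uniq (map cell2 l) by rewrite map_inj_in_uniq.
have := uniq_leq_size cells_uniq cells_in_grid.
by rewrite size_allpairs size_iota size_map mulnn.
Qed.

Section CloseLatticePoints.
Variables (rho : C -> R) (s delta K : R) (w : nat -> C).
Hypotheses (s_gt0 : 0 < s) (delta_gt0 : 0 < delta) (K_gt0 : 0 < K).
Hypothesis rho_gt0 : forall j, 0 < rho (w j).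
Hypothesis disjoint_discs : forall i j, i <> j ->
  Drho rho (s * delta) (w i) `&` Drho rho (s * delta) (w j) = set0.

Definition close n j := distc (w n) (w j) < K * delta * Num.min (rho (w n)) (rho (w j)).

Definition close_bound := ((Num.truncn (2 * K ^+ 2 / s ^+ 2)).+1 ^ 2)%N.

Lemma close_sym : symmetric close.
Proof. by move=> i j; rewrite /close distcC minC. Qed.

Lemma lattice_sqdistc i j : i <> j ->
  (s * delta * (rho (w i) + rho (w j))) ^+ 2 <= sqdistc (w i) (w j).
Proof.
by move=> ij; rewrite mulrDr disjoint_discs_sqdistc ?mulr_gt0 ?disjoint_discs.
Qed.

Lemma close_lt n j : close n j ->
  distc (w n) (w j) < K * delta * rho (w n) /\ distc (w n) (w j) < K * delta * rho (w j).
Proof.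
by move=> close_nj; split; apply: (lt_le_trans close_nj);
  rewrite ler_pM2l ?mulr_gt0 // ge_min lexx ?orbT.
Qed.

Lemma close_in_square n j : close n j ->
  `|(w j).1 - (w n).1| < K * delta * rho (w n) /\
  `|(w j).2 - (w n).2| < K * delta * rho (w n).
Proof.
have r_gt0 : 0 < K * delta * rho (w n) by rewrite !mulr_gt0.
move=> /close_lt[+ _]; rewrite distcC distc_lt_sqr // /sqdistc => near.
rewrite !norm_lt_sqr ?ltW //.
have := sqr_ge0 ((w j).1 - (w n).1); have := sqr_ge0 ((w j).2 - (w n).2).
by split; lra.
Qed.

Lemma close_rho_ratio n j : j <> n -> close n j -> s * rho (w n) < K * rho (w j).
Proof.
move=> jn /close_lt[_ near]; have sep := lattice_sqdistc (nesym jn).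
have rho_n_gt0 := rho_gt0 n; have rho_j_gt0 := rho_gt0 j.
have packed : s * delta * (rho (w n) + rho (w j)) < K * delta * rho (w j).
  rewrite -(ltr_pXn2r (_ : 0 < 2)%N) ?nnegrE ?mulr_ge0 ?addr_ge0 ?ltW //.
  by rewrite distc_lt_sqr ?mulr_gt0 // in near; apply: le_lt_trans near.
have sj_gt0 : 0 < s * delta * rho (w j) by rewrite !mulr_gt0.
rewrite mulrDr in packed.
by rewrite -(ltr_pM2r delta_gt0) !(mulrAC _ (rho _)); lra.
Qed.

Lemma close_neighbours_size n (l : seq nat) : uniq l ->
  (forall j, j \in l -> j <> n /\ close n j) -> (size l <= close_bound)%N.
Proof.
move=> l_uniq l_close; have rho_n_gt0 := rho_gt0 n.
pose h := s ^+ 2 * delta * rho (w n) / K.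
have h_gt0 : 0 < h by rewrite divr_gt0 // !mulr_gt0 // exprn_gt0.
rewrite /close_bound; have -> : 2 * K ^+ 2 / s ^+ 2 = 2 * (K * delta * rho (w n)) / h.
  by rewrite /h; field; rewrite ?gt_eqF ?mulr_gt0 ?exprn_gt0.
apply: (grid_packing (f := w) (c := w n) h_gt0 l_uniq).
  by move=> j /l_close[_ /close_in_square].
have h_lt j : j \in l -> h < s * delta * rho (w j).
  move=> /l_close[jn /(close_rho_ratio jn)] ratio.
  rewrite /h ltr_pdivrMr //.
  have -> : s ^+ 2 * delta * rho (w n) = s * delta * (s * rho (w n)) by ring.
  have -> : s * delta * rho (w j) * K = s * delta * (K * rho (w j)) by ring.
  by rewrite ltr_pM2l ?mulr_gt0.
move=> i j i_l j_l /eqP ij; apply: le_trans (lattice_sqdistc ij); apply: ltW.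
have := h_lt i i_l; have := h_lt j j_l; nra.
Qed.

End CloseLatticePoints.
End Plane.

Section GreedyColouring.
Variable adj : nat -> nat -> bool.

Definition free_colour (col : nat -> nat) n m :=
  ~~ has (fun j => adj n j && (col j == m)) (iota 0 n).

(* only n colours occur before n, so some colour in [0, n] is free *)
Definition greedy_step n (col : nat -> nat) := find (free_colour col n) (iota 0 n.+1).

Fixpoint greedy_prefix n : nat -> nat :=
  if n is n'.+1 then
    fun j => if j == n' then greedy_step n' (greedy_prefix n') else greedy_prefix n' j
  else fun=> 0%N.

Definition greedy_colour n := greedy_prefix n.+1 n.

Lemma greedy_colourE n : greedy_colour n = greedy_step n (greedy_prefix n).
Proof. by rewrite /greedy_colour /= eqxx. Qed.

Lemma greedy_prefixE m j : (j < m)%N -> greedy_prefix m j = greedy_colour j.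
Proof.
elim: m => [//|m IHm] /=; rewrite ltnS leq_eqVlt.
by case: eqP => [-> _|_ /= /IHm //]; rewrite greedy_colourE.
Qed.

Lemma greedy_colour_le n : (greedy_colour n <= count (adj n) (iota 0 n))%N.
Proof.
rewrite -size_filter -(size_map greedy_colour) -[X in (X <= _)%N](size_iota 0).
apply: uniq_leq_size (iota_uniq 0 _) _ => m; rewrite mem_iota add0n /= greedy_colourE.
move=> m_lt; have m_le : (m < n.+1)%N.
  by rewrite -(size_iota 0 n.+1); exact: leq_trans m_lt (find_size _ _).
have := before_find 0%N m_lt; rewrite nth_iota // add0n.
move=> /negbFE /hasP[j]; rewrite mem_iota /= => j_lt /andP[adj_nj /eqP <-].
by rewrite greedy_prefixE // map_f // mem_filter adj_nj mem_iota.
Qed.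

Lemma greedy_colour_lt n j : (j < n)%N -> adj n j -> greedy_colour n != greedy_colour j.
Proof.
move=> j_lt adj_nj.
have col_le : (greedy_colour n <= n)%N.
  by rewrite (leq_trans (greedy_colour_le n)) // (leq_trans (count_size _ _)) ?size_iota.
have : has (free_colour (greedy_prefix n) n) (iota 0 n.+1).
  by rewrite has_find size_iota -/(greedy_step n _) -greedy_colourE ltnS.
move=> /(nth_find 0%N); rewrite -/(greedy_step n _) -greedy_colourE nth_iota ?ltnS //.
move=> /hasPn /(_ j); rewrite mem_iota /= j_lt adj_nj greedy_prefixE // => /(_ isT).
by rewrite add0n eq_sym.
Qed.

Lemma greedy_colour_proper i j : symmetric adj -> i != j -> adj i j ->
  greedy_colour i != greedy_colour j.
Proof.
move=> adj_sym; case: ltngtP => // [ij|ji] _ adj_ij.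
  by rewrite eq_sym greedy_colour_lt // adj_sym.
exact: greedy_colour_lt.
Qed.

End GreedyColouring.

Theorem lemma5p6 (R : realType) (rho : R * R -> R) (alpha s delta : R) (k : nat) :
  L0class rho ->
  (forall z, inD z -> 0 < rho z) ->
  0 < alpha -> 0 < s ->
  (forall r, 0 < r <= alpha -> exists w, lattice rho alpha s r w) ->
  0 < delta <= alpha -> (0 < k)%N ->
  exists M : nat, (0 < M)%N /\
    forall w : nat -> R * R, lattice rho alpha s delta w ->
    exists c : nat -> 'I_M, forall i j, i <> j -> c i = c j ->
      2 ^+ k * delta * Num.min (rho (w i)) (rho (w j)) <= distc (w i) (w j).
Proof.
move=> _ rho_gt0 _ s_gt0 _ /andP[delta_gt0 _] _.
have K_gt0 : 0 < (2 : R) ^+ k by rewrite exprn_gt0.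
set M := (close_bound s (2 ^+ k)).+1.
exists M; split=> // w [w_in _ disjoint_discs _ _].
have rho_w_gt0 j : 0 < rho (w j) by apply: rho_gt0; apply: w_in.
set adj := close rho delta (2 ^+ k) w.
have few_colours n : (greedy_colour adj n < M)%N.
  rewrite ltnS (leq_trans (greedy_colour_le adj n)) // -size_filter.
  apply: (close_neighbours_size s_gt0 delta_gt0 K_gt0 rho_w_gt0 disjoint_discs (n := n)).
    by rewrite filter_uniq ?iota_uniq.
  move=> j; rewrite mem_filter mem_iota /= => /andP[? j_lt]; split=> // jn.
  by rewrite jn ltnn in j_lt.
exists (fun n => Ordinal (few_colours n)) => i j /eqP ij /(congr1 val) /= /eqP same.
rewrite leNgt; apply: contraL same => close_ij.
by apply: greedy_colour_proper ij close_ij; apply: close_sym.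
Qed.
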